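(* The pair $(\ell_2,\ell_2^2)$ fails the uniform sBPBp.
   Context: Scalars $\mathbb{K}=\mathbb{R}$ or $\mathbb{C}$; $\ell_2^2$ is $\mathbb{K}^2$ with the Euclidean norm; $S_X$ is the unit sphere of $X$, $\mathcal{L}(X,Y)$ the bounded linear operators. A pair of Banach spaces $(X,Y)$ has the uniform strong Bishop–Phelps–Bollobás property (uniform sBPBp) if for every $\varepsilon>0$ there exists $\eta(\varepsilon)>0$ such that whenever $T\in\mathcal{L}(X,Y)$ with $\|T\|=1$ and $x_0\in S_X$ satisfy $\|T(x_0)\|>1-\eta(\varepsilon)$, there exists $x_1\in S_X$ with $\|T(x_1)\|=1$ and $\|x_1-x_0\|<\varepsilon$. *)

From Stdlib Require Export Reals.
Open Scope R_scope.

Record scalars := Scalars {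
  sc :> Type;
  scadd : sc -> sc -> sc;
  scopp : sc -> sc;
  scmul : sc -> sc -> sc;
  scabs : sc -> R }.

Definition Rscal : scalars := Scalars R Rplus Ropp Rmult Rabs.

Record Cpx := mkC { re : R; im : R }.
Definition Cadd (z w : Cpx) := mkC (re z + re w) (im z + im w).
Definition Copp (z : Cpx) := mkC (- re z) (- im z).
Definition Cmul (z w : Cpx) :=
  mkC (re z * re w - im z * im w) (re z * im w + im z * re w).
Definition Cabs (z : Cpx) := sqrt (re z ^ 2 + im z ^ 2).
Definition Cscal : scalars := Scalars Cpx Cadd Copp Cmul Cabs.

Section L2.
Variable K : scalars.

(** Elements of the sequence space K^N; ell_2 is the subset with square-summable modulus. *)
Definition sq_norm_is (x : nat -> K) (l : R) : Prop :=
  infinite_sum (fun n => (scabs K (x n)) ^ 2) l.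
Definition in_l2 (x : nat -> K) : Prop := exists l, sq_norm_is x l.
Definition in_sphere (x : nat -> K) : Prop := sq_norm_is x 1.
Definition in_ball (x : nat -> K) : Prop := exists l, sq_norm_is x l /\ l <= 1.
Definition dist_lt (x y : nat -> K) (eps : R) : Prop :=
  exists l, sq_norm_is (fun n => scadd K (x n) (scopp K (y n))) l /\ sqrt l < eps.

Definition norm2 (v : K * K) : R :=
  sqrt ((scabs K (fst v)) ^ 2 + (scabs K (snd v)) ^ 2).

(** T : ell_2 -> ell_2^2 linear (only its values on ell_2 matter). *)
Definition is_linear_op (T : (nat -> K) -> K * K) : Prop :=
  (forall x y, in_l2 x -> in_l2 y ->
     T (fun n => scadd K (x n) (y n)) =
     (scadd K (fst (T x)) (fst (T y)), scadd K (snd (T x)) (snd (T y)))) /\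
  (forall (a : K) x, in_l2 x ->
     T (fun n => scmul K a (x n)) = (scmul K a (fst (T x)), scmul K a (snd (T x)))).

(** ||T|| = 1, i.e. sup_{||x||<=1} ||T x|| = 1 (this also gives boundedness). *)
Definition opnorm_one (T : (nat -> K) -> K * K) : Prop :=
  (forall x, in_ball x -> norm2 (T x) <= 1) /\
  (forall d, 0 < d -> exists x, in_sphere x /\ norm2 (T x) > 1 - d).

Definition uniform_sBPBp : Prop :=
  forall eps, 0 < eps -> exists eta, 0 < eta /\
    forall T, is_linear_op T -> opnorm_one T ->
    forall x0, in_sphere x0 -> norm2 (T x0) > 1 - eta ->
    exists x1, in_sphere x1 /\ norm2 (T x1) = 1 /\ dist_lt x1 x0 eps.

End L2.

(* Let T x = (x_0, c x_1) with |c| = t < 1.  Then ||T|| = 1, attained at e_0, and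
   ||T e_1|| = t, which is as close to 1 as we like.  But ||T x|| = 1 on the unit
   sphere forces |x_0|^2 + t^2 |x_1|^2 = 1 >= |x_0|^2 + |x_1|^2, hence |x_0| = 1, so
   every norm-attaining point lies at distance at least 1 from e_1. *)

From Stdlib Require Import Reals.
From Stdlib Require Import Lra Psatz.

Lemma partial_sum_indicator (f : nat -> R) (k : nat) :
  (forall n, n <> k -> f n = 0) -> f k = 1 ->
  forall n, sum_f_R0 f n = if Nat.leb k n then 1 else 0.
Proof.
  intros f0 fk n; induction n as [|n IH].
  - simpl. destruct k; simpl; [exact fk | apply f0; lia].
  - simpl sum_f_R0. rewrite IH. destruct (Nat.eq_dec (S n) k) as [<- | Hnk].
    + rewrite fk, (proj2 (Nat.leb_gt (S n) n)), Nat.leb_refl by lia. ring.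
    + rewrite (f0 _ Hnk). destruct (Nat.leb k n) eqn:Hkn.
      * apply Nat.leb_le in Hkn. rewrite (proj2 (Nat.leb_le k (S n))) by lia. ring.
      * apply Nat.leb_gt in Hkn. rewrite (proj2 (Nat.leb_gt k (S n))) by lia. ring.
Qed.

Lemma infinite_sum_indicator (f : nat -> R) (k : nat) :
  (forall n, n <> k -> f n = 0) -> f k = 1 -> infinite_sum f 1.
Proof.
  intros f0 fk e He. exists k. intros n Hn.
  rewrite (partial_sum_indicator f k f0 fk n), (proj2 (Nat.leb_le k n)) by lia.
  unfold R_dist. rewrite Rminus_diag, Rabs_R0. exact He.
Qed.

Lemma infinite_sum_term_le (f : nat -> R) (l : R) :
  (forall n, 0 <= f n) -> infinite_sum f l -> forall n, f n <= l.
Proof.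
  intros f_ge0 Hl n. apply Rle_trans with (sum_f_R0 f n).
  - destruct n as [|n]; simpl; [lra|].
    pose proof (cond_pos_sum f n f_ge0). lra.
  - exact (sum_incr f n l Hl f_ge0).
Qed.

Section NormAttainment.
Variable K : scalars.

Local Notation abs := (scabs K).

Lemma sq_norm_coord_le (x : nat -> K) l n : sq_norm_is K x l -> abs (x n) ^ 2 <= l.
Proof.
  intro Hl. exact (infinite_sum_term_le _ l (fun n => pow2_ge_0 _) Hl n).
Qed.

Lemma sq_norm_first_two_le (x : nat -> K) l :
  sq_norm_is K x l -> abs (x 0%nat) ^ 2 + abs (x 1%nat) ^ 2 <= l.
Proof. intro Hl. exact (sum_incr _ 1 l Hl (fun n => pow2_ge_0 _)). Qed.

Lemma dist_lt_coord_sq (x y : nat -> K) eps n :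
  dist_lt K x y eps -> abs (scadd K (x n) (scopp K (y n))) ^ 2 < eps ^ 2.
Proof.
  intros [l [Hl Hsqrt]].
  pose proof (sq_norm_coord_le _ l n Hl) as Hn.
  assert (0 <= l) by (pose proof (pow2_ge_0 (abs (scadd K (x n) (scopp K (y n))))); lra).
  assert (sqrt l ^ 2 = l) by (rewrite <- Rsqr_pow2; apply Rsqr_sqrt; lra).
  pose proof (sqrt_pos l). nra.
Qed.

Variables (zero one : K).
Hypothesis abs_zero : abs zero = 0.
Hypothesis abs_one : abs one = 1.
Hypothesis abs_mul : forall a b, abs (scmul K a b) = abs a * abs b.
Hypothesis mul_addr :
  forall c a b, scmul K c (scadd K a b) = scadd K (scmul K c a) (scmul K c b).
Hypothesis mul_left_comm :
  forall c a b, scmul K c (scmul K a b) = scmul K a (scmul K c b).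
Hypothesis sub_zero : forall a, scadd K a (scopp K zero) = a.
Hypothesis abs_onto_nonneg : forall t, 0 <= t -> exists c, abs c = t.

Definition unit_vec (k : nat) : nat -> K := fun n => if Nat.eqb n k then one else zero.

Lemma unit_vec_sphere k : in_sphere K (unit_vec k).
Proof.
  apply infinite_sum_indicator with k; unfold unit_vec.
  - intros n Hn. rewrite (proj2 (Nat.eqb_neq n k) Hn), abs_zero. ring.
  - rewrite Nat.eqb_refl, abs_one. ring.
Qed.

Definition diag_op (c : K) (x : nat -> K) : K * K := (x 0%nat, scmul K c (x 1%nat)).

Lemma diag_op_linear c : is_linear_op K (diag_op c).
Proof.
  split; intros; unfold diag_op; simpl; [rewrite mul_addr | rewrite mul_left_comm];
    reflexivity.
Qed.

Lemma norm2_diag_op c x :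
  norm2 K (diag_op c x) = sqrt (abs (x 0%nat) ^ 2 + abs c ^ 2 * abs (x 1%nat) ^ 2).
Proof. unfold norm2, diag_op; simpl. rewrite abs_mul. f_equal. ring. Qed.

Lemma norm2_diag_op_unit_vec0 c : norm2 K (diag_op c (unit_vec 0)) = 1.
Proof.
  rewrite norm2_diag_op.
  change (unit_vec 0 0%nat) with one; change (unit_vec 0 1%nat) with zero.
  rewrite abs_one, abs_zero. replace (1 ^ 2 + abs c ^ 2 * 0 ^ 2) with 1 by ring. apply sqrt_1.
Qed.

Lemma norm2_diag_op_unit_vec1 c : 0 <= abs c -> norm2 K (diag_op c (unit_vec 1)) = abs c.
Proof.
  intro c_ge0. rewrite norm2_diag_op.
  change (unit_vec 1 0%nat) with zero; change (unit_vec 1 1%nat) with one.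
  rewrite abs_one, abs_zero.
  replace (0 ^ 2 + abs c ^ 2 * 1 ^ 2) with (abs c ^ 2) by ring. apply sqrt_pow2, c_ge0.
Qed.

Lemma diag_op_opnorm_one c : abs c ^ 2 <= 1 -> opnorm_one K (diag_op c).
Proof.
  intro c_le1. split.
  - intros x [l [Hl l_le1]]. rewrite norm2_diag_op, <- sqrt_1.
    apply sqrt_le_1_alt.
    pose proof (sq_norm_first_two_le x l Hl).
    pose proof (pow2_ge_0 (abs (x 1%nat))). nra.
  - intros d Hd. exists (unit_vec 0).
    split; [apply unit_vec_sphere | rewrite norm2_diag_op_unit_vec0; lra].
Qed.

Lemma diag_op_norm_attained_coord0 c x :
  abs c ^ 2 < 1 -> in_sphere K x -> norm2 K (diag_op c x) = 1 -> abs (x 0%nat) ^ 2 = 1.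
Proof.
  intros c_lt1 Hx Hnorm. rewrite norm2_diag_op in Hnorm.
  pose proof (sq_norm_first_two_le x 1 Hx).
  pose proof (pow2_ge_0 (abs (x 0%nat))). pose proof (pow2_ge_0 (abs (x 1%nat))).
  pose proof (pow2_ge_0 (abs c)).
  assert (Hsum : abs (x 0%nat) ^ 2 + abs c ^ 2 * abs (x 1%nat) ^ 2 = 1).
  { rewrite <- (sqrt_sqrt (abs (x 0%nat) ^ 2 + abs c ^ 2 * abs (x 1%nat) ^ 2)) by nra.
    rewrite Hnorm. ring. }
  assert (abs (x 1%nat) ^ 2 * (1 - abs c ^ 2) <= 0) by nra.
  assert (abs (x 1%nat) ^ 2 = 0) by nra.
  nra.
Qed.

Lemma not_uniform_sBPBp : ~ uniform_sBPBp K.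
Proof.
  intro Hunif. destruct (Hunif 1 Rlt_0_1) as [eta [eta_gt0 Hbpb]].
  set (t := Rmax 0 (1 - eta / 2)).
  assert (t_ge0 : 0 <= t) by apply Rmax_l.
  assert (t_close : 1 - eta / 2 <= t) by apply Rmax_r.
  assert (t_lt1 : t < 1) by (apply Rmax_lub_lt; lra).
  destruct (abs_onto_nonneg t t_ge0) as [c Hc].
  assert (c2_lt1 : abs c ^ 2 < 1) by (rewrite Hc; nra).
  destruct (Hbpb (diag_op c) (diag_op_linear c) (diag_op_opnorm_one c ltac:(lra))
              (unit_vec 1) (unit_vec_sphere 1)) as [x1 [Hx1 [Hnorm Hdist]]].
  { rewrite norm2_diag_op_unit_vec1, Hc; lra. }
  pose proof (diag_op_norm_attained_coord0 c x1 c2_lt1 Hx1 Hnorm) as Hx10.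
  pose proof (dist_lt_coord_sq _ _ _ 0 Hdist) as Hd.
  change (unit_vec 1 0%nat) with zero in Hd. rewrite sub_zero in Hd. lra.
Qed.

End NormAttainment.

Lemma Rscal_not_uniform_sBPBp : ~ uniform_sBPBp Rscal.
Proof.
  apply (not_uniform_sBPBp Rscal 0 1); simpl.
  - apply Rabs_R0.
  - apply Rabs_R1.
  - intros; apply Rabs_mult.
  - intros; ring.
  - intros; ring.
  - intros; ring.
  - intros t Ht; exists t; apply Rabs_pos_eq, Ht.
Qed.

Lemma Cscal_not_uniform_sBPBp : ~ uniform_sBPBp Cscal.
Proof.
  apply (not_uniform_sBPBp Cscal (mkC 0 0) (mkC 1 0)); simpl; unfold Cabs; cbn [re im].
  - replace (0 ^ 2 + 0 ^ 2) with 0 by ring. apply sqrt_0.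
  - replace (1 ^ 2 + 0 ^ 2) with 1 by ring. apply sqrt_1.
  - intros [a1 a2] [b1 b2]; simpl. rewrite <- sqrt_mult by nra. f_equal; ring.
  - intros; unfold Cmul, Cadd; simpl; f_equal; ring.
  - intros; unfold Cmul; simpl; f_equal; ring.
  - intros [a1 a2]; unfold Cadd, Copp; simpl; f_equal; ring.
  - intros t Ht; exists (mkC t 0); cbn [re im].
    replace (t ^ 2 + 0 ^ 2) with (t ^ 2) by ring. apply sqrt_pow2, Ht.
Qed.

Theorem mainTheorem16 : ~ uniform_sBPBp Rscal /\ ~ uniform_sBPBp Cscal.
Proof. exact (conj Rscal_not_uniform_sBPBp Cscal_not_uniform_sBPBp). Qed.
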